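(* Let $\mathcal{N}=(N,M_0)$ be a two-level PT-net system (transitions partitioned into low-level $L$ and high-level $H$) with the property BNDC, and let $M_1$ and $M_2$ be reachable markings of $\mathcal{N}\setminus H$ and $\mathcal{N}$, respectively. If $M_1\,R\,M_2$, then $\mathcal{L}(N\setminus H,M_1)=\mathcal{L}(N\setminus H,M_2)$.
   Context: A PT-net is $N=(P,T,F)$ with $P,T$ finite disjoint and $F:(P\times T)\cup(T\times P)\to\mathbb{N}$; markings $M:P\to\mathbb{N}$; $t$ enabled at $M$ ($M[t\rangle$) iff $M(p)\ge F(p,t)$ for all $p$, firing gives $M'(p)=M(p)+F(t,p)-F(p,t)$ ($M[t\rangle M'$); extended to sequences. $N\setminus H$ deletes the transitions of $H$. $\mathcal{L}(N\setminus H,M)$ is the set of all sequences $s\in L^*$ with $M[s\rangle$ in $N\setminus H$. For systems with disjoint place sets, $\mathcal{N}_1|\mathcal{N}_2$ has the union of places, the union of transitions (shared transitions synchronize, arcs inherited from each component on its own places), and union of initial markings. A high-level net system has only high-level transitions. Transitions in $L$ are observable, those in $H$ unobservable; weak bisimilarity $\approx$ is the existence of a relation between reachable markings containing the initial pair such that, for related $(M,M')$ and symmetrically, an observable step $M[l\rangle$ is matched by unobservable steps, $l$, unobservable steps leading to a related pair, and an unobservable step is matched by unobservable steps leading to a related pair. BNDC: for every high-level net system $\mathcal{N}'$ (places disjoint from those of $\mathcal{N}$) with transition set $H'$ disjoint from $L$, $\mathcal{N}\setminus H\approx(\mathcal{N}|\mathcal{N}')\setminus(H\setminus H')$. The relation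 $R$: $M\,R\,M'$ iff there exist $w\in L^*$ and $w'\in(L\cup H)^*$ with $M_0[w\rangle M$, $M_0[w'\rangle M'$, and $w$ the projection of $w'$ onto $L^*$. *)

From mathcomp Require Import all_boot.
Set Implicit Arguments. Unset Strict Implicit. Unset Printing Implicit Defensive.

(* Transition names are drawn from the (infinite) universe [nat], so that
   transitions of different nets can be shared (synchronised) by name.
   Places of a net form an arbitrary finite type; places of different nets
   are disjoint by construction (composition uses the sum type). *)

Record ptnet := PTNet {
  place : finType;
  trans : seq nat;
  pre   : place -> nat -> nat;
  post  : nat -> place -> nat
}.

Definition marking (N : ptnet) := place N -> nat.

Definition enabled (N : ptnet) (M : marking N) (t : nat) : Prop :=
  t \in trans N /\ forall p, @pre N p t <= M p.

Definition step (N : ptnet) (M : marking N) (t : nat) (M' : marking N) : Prop :=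
  enabled M t /\ M' = (fun p => M p + @post N t p - @pre N p t).

Fixpoint fires (N : ptnet) (M : marking N) (s : seq nat) (M' : marking N)
  : Prop :=
  match s with
  | [::] => M' = M
  | t :: s' => exists M1, step M t M1 /\ fires M1 s' M'
  end.

Definition reachable (N : ptnet) (M0 M : marking N) : Prop :=
  exists s, fires M0 s M.

Definition delete (N : ptnet) (H : seq nat) : ptnet :=
  @PTNet (place N) [seq t <- trans N | t \notin H] (@pre N) (@post N).

Definition lang (N : ptnet) (L H : seq nat) (M : marking N) (s : seq nat)
  : Prop :=
  all (fun t => t \in L) s /\ exists M', @fires (delete N H) M s M'.

(* Parallel composition N1 | N2 : union of places (disjoint sum), union of
   transitions (shared names synchronise), arcs inherited from each component
   on its own places. *)
Definition compose (N1 N2 : ptnet) : ptnet :=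
  @PTNet (place N1 + place N2)%type
    (undup (trans N1 ++ trans N2))
    (fun p t => match p with
                | inl p1 => if t \in trans N1 then @pre N1 p1 t else 0
                | inr p2 => if t \in trans N2 then @pre N2 p2 t else 0
                end)
    (fun t p => match p with
                | inl p1 => if t \in trans N1 then @post N1 t p1 else 0
                | inr p2 => if t \in trans N2 then @post N2 t p2 else 0
                end).

Definition union_marking (N1 N2 : ptnet) (M1 : marking N1) (M2 : marking N2)
  : marking (compose N1 N2) :=
  fun p => match p with inl p1 => M1 p1 | inr p2 => M2 p2 end.

Definition seqdiff (A B : seq nat) : seq nat := [seq t <- A | t \notin B].

Definition tau_star (L : seq nat) (N : ptnet) (M M' : marking N) : Prop :=
  exists s, all (fun t => t \notin L) s /\ fires M s M'.

Definition wb_transfer (L : seq nat) (N1 N2 : ptnet)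
  (R : marking N1 -> marking N2 -> Prop) : Prop :=
  forall M M', R M M' ->
    (forall l M1, l \in L -> step M l M1 ->
       exists Ma Mb Mc, tau_star L M' Ma /\ step Ma l Mb /\
                        tau_star L Mb Mc /\ R M1 Mc) /\
    (forall h M1, h \notin L -> step M h M1 ->
       exists Mc, tau_star L M' Mc /\ R M1 Mc).

Definition weak_bisim (L : seq nat) (N1 N2 : ptnet)
  (M01 : marking N1) (M02 : marking N2) : Prop :=
  exists R : marking N1 -> marking N2 -> Prop,
    (forall M M', R M M' -> reachable M01 M /\ reachable M02 M') /\
    R M01 M02 /\
    wb_transfer L R /\
    wb_transfer L (fun M' M => R M M').

Definition two_level (N : ptnet) (L H : seq nat) : Prop :=
  (forall t, (t \in trans N) = (t \in L) || (t \in H)) /\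
  (forall t, t \in L -> t \notin H).

Definition BNDC (N : ptnet) (L H : seq nat) (M0 : marking N) : Prop :=
  forall (N' : ptnet) (M0' : marking N'),
    (forall t, t \in trans N' -> t \notin L) ->
    @weak_bisim L (delete N H) (delete (compose N N') (seqdiff H (trans N')))
      M0 (union_marking M0 M0').

Definition relR (N : ptnet) (L : seq nat) (M0 M M' : marking N) : Prop :=
  exists w w' : seq nat,
    all (fun t => t \in L) w /\ fires M0 w M /\ fires M0 w' M' /\
    w = [seq t <- w' | t \in L].

(* Feed the high-level part of N a budget net: one place holding k tokens,
   consumed by every high transition.  With k the number of high transitions
   of w', the composed system can replay w' from (M0, k) and ends in (M2, 0),
   where the budget is exhausted.  Since N \ H has no unobservable moves,
   transferring this run back along the BNDC bisimulation yields the unique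
   low run w from M0, i.e. M1, related to (M2, 0).  At budget zero the
   composed system behaves exactly like N \ H from M2, and between two
   systems without unobservable moves weak bisimilarity preserves the
   observable language. *)

From mathcomp Require Import all_boot.
From Stdlib Require Import FunctionalExtensionality.
From mathcomp Require Import zify.

Set Implicit Arguments. Unset Strict Implicit. Unset Printing Implicit Defensive.

Lemma fires_deterministic (N : ptnet) (M M1 M2 : marking N) s :
  fires M s M1 -> fires M s M2 -> M1 = M2.
Proof.
elim: s M => [|t s IHs] M /=; first by move=> -> ->.
by move=> [_ [[_ ->] F1]] [_ [[_ ->] F2]]; apply: IHs F1 F2.
Qed.

Lemma step_delete (N : ptnet) H (M M' : marking N) t :
  @step (delete N H) M t M' -> step M t M'.
Proof. by move=> [[+ Hpre] ->]; rewrite mem_filter => /andP[_ Ht]. Qed.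

Lemma fires_delete (N : ptnet) H (M M' : marking N) s :
  @fires (delete N H) M s M' -> fires M s M'.
Proof.
elim: s M => [|t s IHs] M //= [M1 [S1 F1]].
by exists M1; split; [apply: step_delete S1 | apply: IHs].
Qed.

Section WeakTransfer.

Variables (L : seq nat) (N1 N2 : ptnet) (R : marking N1 -> marking N2 -> Prop).
Variable S : marking N2 -> Prop.
Hypothesis transferR : wb_transfer L R.
Hypothesis tau_star_S : forall Y Y', S Y -> tau_star L Y Y' -> Y' = Y.
Hypothesis step_S : forall Y l Y', S Y -> l \in L -> step Y l Y' -> S Y'.

Lemma wb_transfer_fires s (X X' : marking N1) (Y : marking N2) :
  R X Y -> S Y -> fires X s X' ->
  exists Y', fires Y [seq t <- s | t \in L] Y' /\ R X' Y'.
Proof.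
elim: s X Y => [|t s IHs] X Y RXY SY /=; first by move=> ->; exists Y.
move=> [X1 [S1 F1]]; case: (boolP (t \in L)) => tL.
- have [Ya [Yb [Yc [T1 [S2 [T2 R1]]]]]] := (transferR RXY).1 t X1 tL S1.
  have {T1}EYa := tau_star_S SY T1; subst Ya.
  have SYb := step_S SY tL S2.
  have {T2}EYc := tau_star_S SYb T2; subst Yc.
  have [Y' [FY R']] := IHs X1 Yb R1 SYb F1.
  by exists Y'; split => //; exists Yb.
- have [Yc [T1 R1]] := (transferR RXY).2 t X1 tL S1.
  have {T1}EYc := tau_star_S SY T1; subst Yc.
  exact: IHs R1 SY F1.
Qed.

End WeakTransfer.

Lemma wb_transfer_fires_tau_free L (N1 N2 : ptnet)
    (R : marking N1 -> marking N2 -> Prop) s X X' Y :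
  wb_transfer L R -> (forall Y Y' : marking N2, tau_star L Y Y' -> Y' = Y) ->
  R X Y -> fires X s X' ->
  exists Y', fires Y [seq t <- s | t \in L] Y' /\ R X' Y'.
Proof.
move=> transferR tau_free RXY FX.
by apply: (wb_transfer_fires (S := fun=> True)) RXY _ FX => // Y1 Y2 _ /tau_free.
Qed.

Definition budget_net (H : seq nat) : ptnet :=
  @PTNet unit H (fun _ _ => 1) (fun _ _ => 0).

Section Budget.

Variables (N : ptnet) (L H : seq nat).
Hypothesis two_levelN : two_level N L H.

Definition budgeted : ptnet :=
  delete (compose N (budget_net H)) (seqdiff H (trans (budget_net H))).

Definition with_budget (M : marking N) (k : nat) : marking budgeted :=
  union_marking (N2 := budget_net H) M (fun _ => k).

Lemma budget_net_high t : t \in trans (budget_net H) -> t \notin L.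
Proof.
by move=> tH; apply/negP => tL; case: two_levelN => _ /(_ t tL); rewrite tH.
Qed.

Lemma mem_high t : t \in trans N -> (t \in H) = (t \notin L).
Proof.
case: two_levelN => -> disjLH /orP[tL|tH]; first by rewrite tL (negbTE (disjLH t tL)).
by rewrite tH; apply/esym/negP => /disjLH; rewrite tH.
Qed.

Lemma mem_trans_budgeted t : (t \in trans budgeted) = (t \in trans N).
Proof.
rewrite /= mem_filter mem_undup mem_cat /seqdiff mem_filter.
by case: two_levelN => -> _; case: (t \in H); case: (t \in L).
Qed.

Lemma tau_star_delete (X Y : marking N) :
  @tau_star L (delete N H) X Y -> Y = X.
Proof.
move=> [[|t s] [sL F]]; first exact: F.
move: F sL => /= [_ [[[+ _] _] _]]; rewrite mem_filter => /andP[tH tN] /andP[tL _].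
by move: tH; rewrite mem_high // tL.
Qed.

Lemma step_budgeted (M M' : marking N) t k :
  step M t M' -> (t \notin L -> 0 < k) ->
  @step budgeted (with_budget M k) t (with_budget M' (k - (t \notin L))).
Proof.
move=> [[tN Hpre] ->] Hk; split; first split.
- by rewrite mem_trans_budgeted.
- case=> [p|[]] /=; first by rewrite tN.
  by rewrite (mem_high tN); case: (t \notin L) Hk => // ->.
- apply: functional_extensionality; case=> [p|[]] /=; first by rewrite tN.
  by rewrite (mem_high tN); case: (t \notin L); rewrite ?addn0.
Qed.

Lemma fires_budgeted (M M' : marking N) w k :
  fires M w M' -> count (fun t => t \notin L) w <= k ->
  @fires budgeted (with_budget M k) w
    (with_budget M' (k - count (fun t => t \notin L) w)).
Proof.
elim: w M k => [|t w IHw] M k /=; first by move=> ->; rewrite subn0.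
move=> [M1 [S1 F1]] Hk; exists (with_budget M1 (k - (t \notin L))); split.
  by apply: step_budgeted S1 _; case: (t \notin L) Hk => /=; lia.
by rewrite subnDA; apply: IHw F1 _; case: (t \notin L) Hk => /=; lia.
Qed.

Lemma step_budget0 (M : marking N) t Y :
  @step budgeted (with_budget M 0) t Y ->
  t \in L /\ exists M', @step (delete N H) M t M' /\ Y = with_budget M' 0.
Proof.
move=> [[+ Hpre] ->]; rewrite mem_trans_budgeted => tN.
have tL : t \in L.
  by move: (Hpre (inr tt)); rewrite /= (mem_high tN); case: (t \in L).
have tH : t \notin H by rewrite (mem_high tN) tL.
split=> //; exists (fun p => M p + post t p - pre p t); split.
  split=> //; split; first by rewrite /= mem_filter tH.
  by move=> p; move: (Hpre (inl p)); rewrite /= tN.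
apply: functional_extensionality; case=> [p|[]] /=; first by rewrite tN.
by rewrite (negbTE tH).
Qed.

Lemma tau_star_budget0 (M : marking N) Y :
  @tau_star L budgeted (with_budget M 0) Y -> Y = with_budget M 0.
Proof.
move=> [[|t s] [sL F]]; first exact: F.
by move: F sL => /= [Y1 [/step_budget0 [-> _] _]].
Qed.

Lemma fires_budget0 (M : marking N) s Y :
  @fires budgeted (with_budget M 0) s Y ->
  exists M', @fires (delete N H) M s M'.
Proof.
elim: s M => [|t s IHs] M /=; first by exists M.
move=> [_ [/step_budget0 [_ [M1 [S1 ->]]] F1]].
by have [M' F'] := IHs M1 F1; exists M', M1.
Qed.

Lemma fires_low_budget0 (M M' : marking N) s :
  all (fun t => t \in L) s -> @fires (delete N H) M s M' ->
  @fires budgeted (with_budget M 0) s (with_budget M' 0).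
Proof.
move=> sL /fires_delete F.
have count0 : count (fun t => t \notin L) s = 0.
  by elim: s sL {F} => //= t s IHs /andP[-> /IHs ->].
by have := fires_budgeted F; rewrite count0 => /(_ 0 (leqnn 0)).
Qed.

Lemma wb_transfer_fires_budget0 (N1 : ptnet)
    (R : marking N1 -> marking budgeted -> Prop) X X' M s :
  wb_transfer L R -> all (fun t => t \in L) s ->
  R X (with_budget M 0) -> fires X s X' ->
  exists M', @fires (delete N H) M s M'.
Proof.
move=> transferR sL RXM FX.
pose S Y := exists M, Y = with_budget M 0.
have tau_star_S Y Y' : S Y -> tau_star L Y Y' -> Y' = Y.
  by move=> [M' ->]; apply: tau_star_budget0.
have step_S Y l Y' : S Y -> l \in L -> step Y l Y' -> S Y'.
  by move=> [M' ->] _ /step_budget0 [_ [M'' [_ ->]]]; exists M''.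
have [Y [+ _]] := wb_transfer_fires transferR tau_star_S step_S RXM
  (ex_intro _ M erefl) FX.
by rewrite (all_filterP sL) => /fires_budget0.
Qed.

End Budget.

Theorem lemma2 (N : ptnet) (L H : seq nat) (M0 M1 M2 : marking N) :
  two_level N L H ->
  BNDC L H M0 ->
  @reachable (delete N H) M0 M1 ->
  reachable M0 M2 ->
  relR L M0 M1 M2 ->
  forall s, lang L H M1 s <-> lang L H M2 s.
Proof.
move=> HN HB _ _ [w [w' [_ [F1 [F2 Ew]]]]] s; subst w.
set k := count (fun t => t \notin L) w'.
have [R [_ [R0 [HR HRinv]]]] := HB _ (fun _ => k) (budget_net_high HN).
have tau_free := @tau_star_delete _ _ _ HN.
have := fires_budgeted HN F2 (leqnn k); rewrite subnn => F2b.
have [X [FX RX]] := wb_transfer_fires_tau_free HRinv tau_free R0 F2b.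
rewrite (fires_deterministic (fires_delete FX) F1) in RX.
split=> -[sL [M' F]]; split=> //.
- exact: wb_transfer_fires_budget0 HR sL RX F.
- have [X' [+ _]] := wb_transfer_fires_tau_free HRinv tau_free RX
    (fires_low_budget0 HN sL F).
  by rewrite (all_filterP sL); exists X'.
Qed.
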